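(* Let $x_1<x_2<x_3$ and $y_1<y_2<y_3$ be real numbers and $Z=(z_{ij})\in\mathbb{R}^{3\times 3}$. Put $P_{ij}:=(x_i,y_j,z_{ij})\in\mathbb{R}^3$ for $i,j\in\{1,2,3\}$, and define $A_i:=\operatorname{conv}\{P_{i1},P_{i2},P_{i3}\}$ and $B_j:=\operatorname{conv}\{P_{1j},P_{2j},P_{3j}\}$. Then either there is a line contained in the plane $\{(x_2,s,t): s,t\in\mathbb{R}\}$ intersecting all of $B_1,B_2,B_3$, or there is a line contained in the plane $\{(s,y_2,t): s,t\in\mathbb{R}\}$ intersecting all of $A_1,A_2,A_3$. *)

From HB Require Import structures.
From mathcomp Require Import all_boot all_order all_algebra.
From mathcomp Require Import reals.
Set Implicit Arguments. Unset Strict Implicit. Unset Printing Implicit Defensive.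
Import Order.TTheory GRing.Theory Num.Theory.
Local Open Scope ring_scope.

(* the three indices {1,2,3} of the paper are ordinals 0,1,2 of 'I_3 *)
Definition i0 : 'I_3 := @Ordinal 3 0 isT.
Definition i1 : 'I_3 := @Ordinal 3 1 isT.
Definition i2 : 'I_3 := @Ordinal 3 2 isT.

Definition pt3 {R : realType} (a b c : R) : 'rV[R]_3 :=
  \row_(k < 3) (if k == i0 then a else if k == i1 then b else c).

Definition coord {R : realType} (q : 'rV[R]_3) (k : 'I_3) : R := q ord0 k.

Definition conv3 {R : realType} (a b c : 'rV[R]_3) (q : 'rV[R]_3) : Prop :=
  exists (al be ga : R), [/\ 0 <= al, 0 <= be, 0 <= ga, al + be + ga = 1
                         & q = al *: a + be *: b + ga *: c].

Definition is_line {R : realType} (L : 'rV[R]_3 -> Prop) : Prop :=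
  exists (p d : 'rV[R]_3), d != 0 /\ forall q, L q <-> exists t : R, q = p + t *: d.

Definition coord_plane {R : realType} (k : 'I_3) (c : R) (q : 'rV[R]_3) : Prop :=
  coord q k = c.

(* The plane x = x_2 cuts each B_j in the vertical segment between z_2j and
   the height a_j at which the edge [P_1j, P_3j] crosses it, and a line of that
   plane through heights c_1, c_3 above y_1, y_3 passes above y_2 at the
   interpolated height.  Taking c_j = th a_j + (1 - th) z_2j, this middle
   height sweeps the segment [Q, b_2], where Q is the bilinear interpolation
   at (x_2, y_2) of the four corner values z_11, z_13, z_31, z_33 and b_2 the
   interpolation of z_21, z_23; so the line exists as soon as [Q, b_2] meets
   [a_2, z_22].  Symmetrically, a line in the plane y = y_2 exists as soon as
   [Q, a_2] meets [b_2, z_22], with the same Q.  For any four reals one of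
   these two intersections is nonempty. *)

From HB Require Import structures.
From mathcomp Require Import all_boot all_order all_algebra.
From mathcomp Require Import fingroup perm reals.
From mathcomp Require Import ring lra.

Set Implicit Arguments.
Unset Strict Implicit.
Unset Printing Implicit Defensive.

Import Order.TTheory GRing.Theory Num.Theory.
Local Open Scope ring_scope.

Lemma ord3_cases (j : 'I_3) : [\/ j = i0, j = i1 | j = i2].
Proof.
by case: j => -[|[|[|//]]] hj; [constructor 1|constructor 2|constructor 3];
  apply: val_inj.
Qed.

Section Segments.
Variable R : realFieldType.

Definition on_segment (a b t : R) : Prop :=
  exists2 th, 0 <= th <= 1 & t = th * a + (1 - th) * b.

Lemma on_segmentC a b t : on_segment a b t -> on_segment b a t.
Proof. by case=> th th01 ->; exists (1 - th); [lra | ring]. Qed.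

Lemma on_segment_between a b t :
  (a <= t <= b) \/ (b <= t <= a) -> on_segment a b t.
Proof.
wlog le_ab : a b / a <= b => [hwlog|].
  have [/hwlog//|/ltW/hwlog hba htab] := lerP a b.
  by apply/on_segmentC/hba; case: htab; [right|left].
move=> htab; have [le_ba|lt_ab] := lerP b a.
  by exists 1; [lra | have -> : t = a by lra]; ring.
exists ((b - t) / (b - a)); last by field; rewrite subr_eq0 gt_eqF.
by rewrite divr_ge0 ?ler_pdivrMr ?mul1r /=; lra.
Qed.

(* If a or b lies between Q and the other, it is a common point; otherwise
   Q separates a from b, hence lies between M and one of them. *)
Lemma on_segment_cross Q a b M :
  (exists2 t, on_segment Q b t & on_segment a M t) \/
  (exists2 t, on_segment Q a t & on_segment b M t).
Proof.
have [aQ|Qa] := lerP a Q; have [bQ|Qb] := lerP b Q; have [MQ|QM] := lerP M Q;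
have [ab|ba] := lerP a b;
first [ by left; exists Q; apply: on_segment_between; lra
      | by left; exists a; apply: on_segment_between; lra
      | by right; exists Q; apply: on_segment_between; lra
      | by right; exists b; apply: on_segment_between; lra ].
Qed.

Definition mid_weight (u : 'I_3 -> R) : R := (u i2 - u i1) / (u i2 - u i0).

(* The value at u i1 of the affine function through (u i0, f i0) and
   (u i2, f i2). *)
Definition interp_mid (u f : 'I_3 -> R) : R :=
  mid_weight u * f i0 + (1 - mid_weight u) * f i2.

Lemma mid_weight_itv u : u i0 < u i1 /\ u i1 < u i2 -> 0 <= mid_weight u <= 1.
Proof.
move=> hu; have hd : 0 < u i2 - u i0 by lra.
by rewrite divr_ge0 ?ler_pdivrMr ?mul1r /=; lra.
Qed.

Lemma interp_mid_id u : u i0 != u i2 -> interp_mid u u = u i1.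
Proof.
by move=> hu; rewrite /interp_mid /mid_weight; field; rewrite subr_eq0 eq_sym.
Qed.

Lemma interp_midC u v (f : 'I_3 -> 'I_3 -> R) :
  interp_mid u (fun i => interp_mid v (f i)) =
  interp_mid v (fun j => interp_mid u (f^~ j)).
Proof. by rewrite /interp_mid; ring. Qed.

End Segments.

Section Geometry.
Variable R : realType.
Implicit Types (p q : 'rV[R]_3) (M : 'M[R]_3).

Lemma pt3_lerp (t a b c a' b' c' : R) :
  t *: pt3 a b c + (1 - t) *: pt3 a' b' c' =
  pt3 (t * a + (1 - t) * a') (t * b + (1 - t) * b') (t * c + (1 - t) * c').
Proof. by apply/rowP => k; rewrite !mxE; case: ifP => _; [|case: ifP]. Qed.

Lemma conv3_lerp (p0 p1 p2 : 'rV[R]_3) (l th : R) :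
  0 <= l <= 1 -> 0 <= th <= 1 ->
  conv3 p0 p1 p2 (th *: (l *: p0 + (1 - l) *: p2) + (1 - th) *: p1).
Proof.
move=> l01 th01; exists (th * l), (1 - th), (th * (1 - l)).
by split; [nra | lra | nra | ring | rewrite scalerDr !scalerA addrAC].
Qed.

Definition line_through p p' q : Prop :=
  exists t : R, q = t *: p + (1 - t) *: p'.

Lemma is_line_through p p' : p != p' -> is_line (line_through p p').
Proof.
move=> neq_pp'; exists p', (p - p'); split; first by rewrite subr_eq0.
have E t : t *: p + (1 - t) *: p' = p' + t *: (p - p').
  by apply/rowP => k; rewrite !mxE; ring.
by move=> q; split=> -[t ->]; exists t; rewrite E.
Qed.

Lemma line_through_coord p p' k (c : R) q :
  coord p k = c -> coord p' k = c -> line_through p p' q -> coord q k = c.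
Proof. by rewrite /coord => hp hp' [t ->]; rewrite !mxE hp hp'; ring. Qed.

Lemma conv3_mulmx M a b c q :
  conv3 a b c q -> conv3 (a *m M) (b *m M) (c *m M) (q *m M).
Proof.
case=> al [be [ga [? ? ? ? ->]]]; exists al, be, ga.
by split; rewrite // !mulmxDl !scalemxAl.
Qed.

Lemma is_line_mulmx M (L : 'rV[R]_3 -> Prop) : M \in unitmx -> is_line L ->
  is_line (fun q => exists2 q0, L q0 & q = q0 *m M).
Proof.
move=> uM [p [d [d0 hL]]]; exists (p *m M), (d *m M).
split; first by rewrite mulmx_free_eq0 ?row_free_unit.
move=> q; split.
  by case=> q0 /hL[t ->] ->; exists t; rewrite mulmxDl scalemxAl.
case=> t ->; exists (p + t *: d); last by rewrite mulmxDl scalemxAl.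
by apply/hL; exists t.
Qed.

Lemma pt3_tperm01 (a b c : R) : pt3 a b c *m perm_mx (tperm i0 i1) = pt3 b a c.
Proof.
rewrite -tpermV -col_permE.
by apply/rowP => k; have [->|->|->] := ord3_cases k; rewrite !mxE permE.
Qed.

Lemma coord_tperm01 q : coord (q *m perm_mx (tperm i0 i1)) i1 = coord q i0.
Proof. by rewrite /coord -[in LHS]tpermV -col_permE !mxE tpermR. Qed.

End Geometry.

Section PlaneSections.
Variables (R : realType) (x y : 'I_3 -> R) (z : 'I_3 -> 'I_3 -> R).
Hypotheses (hx : x i0 < x i1 /\ x i1 < x i2) (hy : y i0 < y i1 /\ y i1 < y i2).

Local Notation P i j := (pt3 (x i) (y j) (z i j)).
(* The height at which the edge [P i0 j, P i2 j] crosses the plane x = x i1. *)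
Local Notation col_mid j := (interp_mid x (fun i => z i j)).

Lemma column_section_conv3 j c : on_segment (col_mid j) (z i1 j) c ->
  conv3 (P i0 j) (P i1 j) (P i2 j) (pt3 (x i1) (y j) c).
Proof.
case=> th th01 ->; have hx1 : interp_mid x x = x i1.
  by apply: interp_mid_id; rewrite lt_eqF //; case: hx; apply: lt_trans.
suff -> : pt3 (x i1) (y j) (th * col_mid j + (1 - th) * z i1 j) =
  th *: (mid_weight x *: P i0 j + (1 - mid_weight x) *: P i2 j)
  + (1 - th) *: P i1 j.
  exact/conv3_lerp/th01/mid_weight_itv.
by rewrite !pt3_lerp -hx1 /interp_mid; congr pt3; ring.
Qed.

Lemma plane_line_columns (c : 'I_3 -> R) :
  on_segment (col_mid i0) (z i1 i0) (c i0) ->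
  on_segment (col_mid i2) (z i1 i2) (c i2) ->
  on_segment (col_mid i1) (z i1 i1) (interp_mid y c) ->
  exists L : 'rV[R]_3 -> Prop, is_line L /\
    (forall q, L q -> coord_plane i0 (x i1) q) /\
    (forall j, exists q, L q /\ conv3 (P i0 j) (P i1 j) (P i2 j) q).
Proof.
move=> h0 h2 h1; have hy1 : interp_mid y y = y i1.
  by apply: interp_mid_id; rewrite lt_eqF //; case: hy; apply: lt_trans.
exists (line_through (pt3 (x i1) (y i0) (c i0)) (pt3 (x i1) (y i2) (c i2))).
split; [|split].
- apply: is_line_through; apply/eqP => /rowP/(_ i1); rewrite !mxE /=.
  by move: hy; lra.
- by move=> q; apply: line_through_coord; rewrite /coord mxE.
move=> j; have [->|->|->] := ord3_cases j.
- exists (pt3 (x i1) (y i0) (c i0)); split; last exact: column_section_conv3.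
  by exists 1; rewrite subrr scale1r scale0r addr0.
- exists (pt3 (x i1) (y i1) (interp_mid y c)).
  split; last exact: column_section_conv3.
  by exists (mid_weight y); rewrite pt3_lerp -hy1; congr pt3; ring.
- exists (pt3 (x i1) (y i2) (c i2)); split; last exact: column_section_conv3.
  by exists 0; rewrite subr0 scale1r scale0r add0r.
Qed.

Lemma plane_line_columns_cross t :
  on_segment (interp_mid y (fun j => col_mid j)) (interp_mid y (z i1)) t ->
  on_segment (col_mid i1) (z i1 i1) t ->
  exists L : 'rV[R]_3 -> Prop, is_line L /\
    (forall q, L q -> coord_plane i0 (x i1) q) /\
    (forall j, exists q, L q /\ conv3 (P i0 j) (P i1 j) (P i2 j) q).
Proof.
(* By bilinearity the line through the outer heights then passes the middle
   column at height t. *)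
case=> th th01 -> h1.
apply: (plane_line_columns (c := fun j => th * col_mid j + (1 - th) * z i1 j)).
- by exists th.
- by exists th.
- by congr (on_segment _ _ _): h1; rewrite /interp_mid; ring.
Qed.

End PlaneSections.

Lemma plane_line_rows_cross (R : realType) (x y : 'I_3 -> R)
  (z : 'I_3 -> 'I_3 -> R)
  (hx : x i0 < x i1 /\ x i1 < x i2) (hy : y i0 < y i1 /\ y i1 < y i2) t :
  on_segment (interp_mid y (fun j => interp_mid x (fun i => z i j)))
             (interp_mid x (fun i => z i i1)) t ->
  on_segment (interp_mid y (z i1)) (z i1 i1) t ->
  exists L : 'rV[R]_3 -> Prop, is_line L /\
    (forall q, L q -> coord_plane i1 (y i1) q) /\
    (forall i, exists q, L q /\
       conv3 (pt3 (x i) (y i0) (z i i0)) (pt3 (x i) (y i1) (z i i1))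
             (pt3 (x i) (y i2) (z i i2)) q).
Proof.
(* Exchanging the first two coordinates turns rows into columns. *)
rewrite -interp_midC => hQ ha.
have [L [lineL [planeL meetL]]] :=
  plane_line_columns_cross hy hx (z := fun j i => z i j) hQ ha.
exists (fun q => exists2 q0, L q0 & q = q0 *m perm_mx (tperm i0 i1)).
split; [|split].
- exact/is_line_mulmx/lineL/unitmx_perm.
- by move=> _ [q0 /planeL hq0 ->]; rewrite /coord_plane coord_tperm01.
move=> i; have [q0 [Lq0 /(conv3_mulmx (perm_mx (tperm i0 i1)))]] := meetL i.
rewrite !pt3_tperm01 => hA.
by exists (q0 *m perm_mx (tperm i0 i1)); split; first exists q0.
Qed.

Theorem lemma3 (R : realType) (x y : 'I_3 -> R) (Z : 'M[R]_3)
  (hx : x i0 < x i1 /\ x i1 < x i2) (hy : y i0 < y i1 /\ y i1 < y i2) :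
  let P := fun i j => pt3 (x i) (y j) (Z i j) in
  let A := fun i => conv3 (P i i0) (P i i1) (P i i2) in
  let B := fun j => conv3 (P i0 j) (P i1 j) (P i2 j) in
  (exists L : 'rV[R]_3 -> Prop, is_line L /\
     (forall q, L q -> coord_plane i0 (x i1) q) /\
     (forall j : 'I_3, exists q, L q /\ B j q))
  \/
  (exists L : 'rV[R]_3 -> Prop, is_line L /\
     (forall q, L q -> coord_plane i1 (y i1) q) /\
     (forall i : 'I_3, exists q, L q /\ A i q)).
Proof.
move=> P A B.
have [[t hQb haM] | [t hQa hbM]] := on_segment_cross
  (interp_mid y (fun j => interp_mid x (fun i => Z i j)))
  (interp_mid x (fun i => Z i i1)) (interp_mid y (fun j => Z i1 j)) (Z i1 i1).
- by left; apply: (plane_line_columns_cross (z := fun i j => Z i j)) hQb haM.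
- by right; apply: (plane_line_rows_cross (z := fun i j => Z i j)) hQa hbM.
Qed.
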